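(* Let $n\ge1$ and $\mathbf i\in\Sigma_{n+1}$. (1) If $\mathrm{ind}_D(\mathbf i)=0$, then for every $k\in[n]$ the path in $G(\mathbf i,k)$ with wire-expression $\ell_k\to\ell_{n+1}\to\ell_{k+1}$ (go up $\ell_k$ from $L_k$ to $\ell_k\cap\ell_{n+1}$, switch to $\ell_{n+1}$, go down to $\ell_{n+1}\cap\ell_{k+1}$, switch to $\ell_{k+1}$, go down to $L_{k+1}$) is a rigorous path; it is the D-canonical path with unique peak $\ell_k\cap\ell_{n+1}$. (2) If $\mathrm{ind}_A(\mathbf i)=0$, then for every $k\in[n]$ the path in $G(\mathbf i,k)$ with wire-expression $\ell_k\to\ell_1\to\ell_{k+1}$ is a rigorous path; it is the A-canonical path with unique peak $\ell_1\cap\ell_{k+1}$.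
   Context: $N=n(n+1)/2$; $\Sigma_{n+1}$: reduced words $(i_1,\dots,i_N)$ of the longest element of $\mathfrak S_{n+1}$ in $s_i=(i,i+1)$. Wiring diagram $G(\mathbf i)$: $n+1$ wires $\ell_1,\dots,\ell_{n+1}$ run top to bottom through positions $1,\dots,n+1$; at the top $\ell_k$ is in position $k$; the $j$-th node swaps the wires in positions $i_j,i_j+1$; at the bottom $\ell_k$ is in position $n+2-k$ and ends at $L_k$. Rigorous paths: for $k\in[n]$, $G(\mathbf i,k)$ has $\ell_1,\dots,\ell_k$ oriented upward and the rest downward. A rigorous path in $G(\mathbf i,k)$ starts at $L_k$, ends at $L_{k+1}$, moves along wires in their orientation, switches wires only at their crossing node, passes each node at most once, and never passes straight through $\ell_a\cap\ell_b$ while on $\ell_a$ when both are downward with $a>b$ or both upward with $a<b$. Indices: a 2-move exchanges adjacent letters $i,j$ with $|i-j|>1$, generating $\sim$. Every $\mathbf i$ satisfies $\mathbf i\sim\mathbf i_D^-(n,\dots,1)\mathbf i_D^+\sim\mathbf i_A^-(1,\dots,n)\mathbf i_A^+$; $\mathrm{ind}_D(\mathbf i)=|\mathbf i_D^+|$, $\mathrm{ind}_A(\mathbf i)=|\mathbf i_A^+|$ (lengths; independent of choices). Equivalently $\mathrm{ind}_D(\mathbf i)$ is the number of nodes not on $\ell_{n+1}$ on the side of $\ell_{n+1}$ containing $L_1,\dots,L_n$, and $\mathrm{ind}_A(\mathbf i)$ the number of nodes not on $\ell_1$ on the side of $\ell_1$ containing $L_2,\dots,L_{n+1}$. *)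

From mathcomp Require Import all_boot.
Set Implicit Arguments. Unset Strict Implicit. Unset Printing Implicit Defensive.

(* Wires are the naturals 1..n+1; positions are 1..n+1.  An arrangement is a
   list whose entry at index p-1 is the wire currently in position p.
   Nodes of the diagram of a word w are indexed 0..size w - 1 (top to bottom);
   node j applies s_{w_j}, i.e. swaps the wires in positions w_j, w_j + 1. *)

Definition swap_at (s : seq nat) (p : nat) : seq nat :=
  set_nth 0 (set_nth 0 s p.-1 (nth 0 s p)) p (nth 0 s p.-1).

(* arrangement just above node j (after the first j nodes) *)
Definition arr (n : nat) (w : seq nat) (j : nat) : seq nat :=
  foldl swap_at (iota 1 n.+1) (take j w).

(* Sigma_{n+1}: words of length N = n(n+1)/2 in the letters 1..n whose
   product is the longest element (bottom arrangement is reversed, i.e.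
   ell_k ends in position n+2-k). *)
Definition Sigma (n : nat) (w : seq nat) : bool :=
  [&& size w == (n * n.+1) %/ 2,
      all (fun i => 1 <= i <= n) w &
      arr n w (size w) == rev (iota 1 n.+1)].

Definition wireL n w j := nth 0 (arr n w j) (nth 0 w j).-1.
Definition wireR n w j := nth 0 (arr n w j) (nth 0 w j).

Definition on_wire n w (a j : nat) : bool := (wireL n w j == a) || (wireR n w j == a).
Definition other n w (a j : nat) : nat := if wireL n w j == a then wireR n w j else wireL n w j.

Definition is_cross n w (a b : nat) (j : nat) : bool :=
  (j < size w) &&
  ((wireL n w j == a) && (wireR n w j == b) || (wireL n w j == b) && (wireR n w j == a)).

(* the node ell_a \cap ell_b (size w if there is none) *)
Definition xnode n w (a b : nat) : nat := find (is_cross n w a b) (iota 0 (size w)).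

Definition pos n w (a j : nat) : nat := (index a (arr n w j)).+1.

(* ind_D: nodes not on ell_{n+1} lying on the side of ell_{n+1} containing
   L_1..L_n (= right of ell_{n+1}, higher positions). *)
Definition indD n w : nat :=
  count (fun j => ~~ on_wire n w n.+1 j && (pos n w n.+1 j < nth 0 w j))
        (iota 0 (size w)).

(* ind_A: nodes not on ell_1 lying on the side of ell_1 containing
   L_2..L_{n+1} (= left of ell_1, lower positions). *)
Definition indA n w : nat :=
  count (fun j => ~~ on_wire n w 1 j && ((nth 0 w j).+1 < pos n w 1 j))
        (iota 0 (size w)).

(* In G(i,k), wires ell_1..ell_k are oriented upward, the others downward. *)
Definition up (k a : nat) : bool := a <= k.

(* A path is given by its wire-expression ws = [w_0; ...; w_m]; it switches
   from w_{s-1} to w_s at their crossing node. *)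
Definition switches n w (ws : seq nat) : seq nat :=
  [seq xnode n w p.1 p.2 | p <- zip ws (behead ws)].

(* endpoints (node indices) of the segments; size w stands for the bottom
   (the points L_k) *)
Definition seg_times n w (ws : seq nat) : seq nat :=
  size w :: rcons (switches n w ws) (size w).

(* segments: (wire, (start, end)) *)
Definition segments n w (ws : seq nat) : seq (nat * (nat * nat)) :=
  zip ws (zip (seg_times n w ws) (behead (seg_times n w ws))).

(* moving along the wire in its orientation: upward = decreasing node index *)
Definition seg_oriented (k : nat) (sg : nat * (nat * nat)) : bool :=
  if up k sg.1 then sg.2.2 < sg.2.1 else sg.2.1 < sg.2.2.

Definition straight n w (sg : nat * (nat * nat)) : seq nat :=
  [seq j <- iota 0 (size w) | on_wire n w sg.1 j &&
     (minn sg.2.1 sg.2.2 < j < maxn sg.2.1 sg.2.2)].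

Definition passed n w (ws : seq nat) : seq nat :=
  flatten [seq straight n w sg | sg <- segments n w ws] ++ switches n w ws.

Definition forbidden n w (k a j : nat) : bool :=
  let b := other n w a j in
  (~~ up k a && ~~ up k b && (b < a)) || (up k a && up k b && (a < b)).

Definition rigorous n w (k : nat) (ws : seq nat) : bool :=
  [&& head 0 ws == k, last 0 ws == k.+1,
      all (fun c => c < size w) (switches n w ws),
      all (seg_oriented k) (segments n w ws),
      uniq (passed n w ws) &
      all (fun sg => all (fun j => ~~ forbidden n w k sg.1 j) (straight n w sg))
          (segments n w ws)].

Definition peaks n w (k : nat) (ws : seq nat) : seq nat :=
  [seq xnode n w p.1 p.2 | p <- zip ws (behead ws) & up k p.1 && ~~ up k p.2].

(* merge consecutive repeated wires (so l_n -> l_{n+1} -> l_{n+1} is l_n -> l_{n+1}) *)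
Fixpoint compress (s : seq nat) : seq nat :=
  match s with
  | x :: ((y :: _) as t) => if x == y then compress t else x :: compress t
  | _ => s
  end.

From mathcomp Require Import all_boot zify.
Set Implicit Arguments. Unset Strict Implicit. Unset Printing Implicit Defensive.

(* Since w is reduced and has length N = n(n+1)/2, the inversion number of
   the arrangement climbs from 0 to N in N steps of +-1, so every node is an
   ascent: the wire on the left is the smaller one (node_ascent).

   If ind_D(w) = 0, every node off ell_(n+1) lies to the left of ell_(n+1).
   Hence ell_(n+1) sweeps from right to left, meeting ell_n, ..., ell_1 in
   this order; the positions to its right are never touched again, so each
   wire is frozen after crossing ell_(n+1).  The counter crossedD of wires
   already met by ell_(n+1) grows by one exactly at the nodes on ell_(n+1)
   (unit_steps_* lemmas); it takes every value, which locates the crossing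
   nodes.  Consequently the segments of the path l_k -> l_(n+1) -> l_(k+1)
   pass straight through no node at all, so rigorousness reduces to the
   orientation of the segments and the distinctness of the two switches
   (rigorous3, rigorous2).  The case ind_A(w) = 0 is the mirror image:
   ell_1 sweeps from left to right, and its position counts its crossings. *)

(* Swapping the entries at (0-based) indices p.-1 and p of a list: the entry
   at index i of swap_at s p is the entry of s at index swap_index p i. *)
Definition swap_index (p i : nat) : nat :=
  if i == p.-1 then p else if i == p then p.-1 else i.

Lemma swap_indexK p i : 0 < p -> swap_index p (swap_index p i) = i.
Proof. by rewrite /swap_index => p_gt0; do ![case: eqP => //=]; lia. Qed.

Lemma swap_index_lt p i m : 0 < p < m -> (swap_index p i < m) = (i < m).
Proof. by rewrite /swap_index => hp; do ![case: eqP => //=]; lia. Qed.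

Lemma swap_index_left p : swap_index p p.-1 = p.
Proof. by rewrite /swap_index eqxx. Qed.

Lemma swap_index_right p : 0 < p -> swap_index p p = p.-1.
Proof. by rewrite /swap_index => p_gt0; rewrite ifN_eq ?eqxx //; apply/eqP; lia. Qed.

Lemma swap_index_id p i : i != p.-1 -> i != p -> swap_index p i = i.
Proof. by rewrite /swap_index => /negbTE -> /negbTE ->. Qed.

Lemma swap_index_mono p i i' : 0 < p -> ~~ ((i == p.-1) && (i' == p)) ->
  ~~ ((i == p) && (i' == p.-1)) -> (swap_index p i < swap_index p i') = (i < i').
Proof. by rewrite /swap_index => p_gt0; do ![case: eqP => //=]; lia. Qed.

Lemma size_swap s p : 0 < p < size s -> size (swap_at s p) = size s.
Proof. by move=> hp; rewrite /swap_at !size_set_nth; lia. Qed.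

Lemma nth_swap s p i : 0 < p < size s ->
  nth 0 (swap_at s p) i = nth 0 s (swap_index p i).
Proof.
move=> hp; rewrite /swap_at !nth_set_nth /= /swap_index.
case: (eqVneq i p) => [->|ip]; first by rewrite ifN_eq //; apply/eqP; lia.
by case: (eqVneq i p.-1) => [->|ip1]; rewrite /= nth_set_nth /= ?eqxx ?(negbTE ip1).
Qed.

Lemma mem_swap (s : seq nat) p a : 0 < p < size s -> (a \in swap_at s p) = (a \in s).
Proof.
move=> hp; have p_gt0 : 0 < p by lia.
apply/(nthP 0)/(nthP 0) => -[i hi <-].
  by exists (swap_index p i); rewrite ?nth_swap // swap_index_lt // -(size_swap hp).
by exists (swap_index p i); rewrite ?nth_swap ?swap_indexK // size_swap // swap_index_lt.
Qed.

Lemma uniq_swap (s : seq nat) p : 0 < p < size s -> uniq s -> uniq (swap_at s p).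
Proof.
move=> hp /(uniqP 0) s_inj; apply/(uniqP 0) => i j; rewrite !inE size_swap // => hi hj.
have p_gt0 : 0 < p by lia.
rewrite !nth_swap // => /s_inj; rewrite !inE !swap_index_lt // => /(_ hi hj) eq_ij.
by rewrite -(swap_indexK i p_gt0) eq_ij swap_indexK.
Qed.

Lemma index_swap (s : seq nat) p a : 0 < p < size s -> uniq s ->
  index a (swap_at s p) = swap_index p (index a s).
Proof.
move=> hp s_uniq; have /andP[p_gt0 p_lt] := hp.
case: (boolP (a \in s)) => sa; last first.
  rewrite !memNindex ?mem_swap //.
  rewrite size_swap // /swap_index !gtn_eqF //.
  exact: leq_ltn_trans (leq_pred p) p_lt.
rewrite -{1}(nth_index 0 sa) -{1}(swap_indexK (index a s) p_gt0) -nth_swap //.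
rewrite index_uniq ?uniq_swap //.
by rewrite size_swap // swap_index_lt // index_mem.
Qed.

Lemma swapK s p : 0 < p < size s -> swap_at (swap_at s p) p = s.
Proof.
move=> hp; apply: (@eq_from_nth _ 0); first by rewrite !size_swap.
by move=> i _; rewrite nth_swap ?size_swap // nth_swap // swap_indexK //; lia.
Qed.

Definition letters (n : nat) (w : seq nat) : bool := all (fun i => 1 <= i <= n) w.

Lemma letter_range n w j : letters n w -> j < size w -> 0 < nth 0 w j < n.+1.
Proof. by move=> /allP w_letters j_lt; have /= := w_letters _ (mem_nth 0 j_lt); lia. Qed.

Lemma SigmaP n w : Sigma n w ->
  [/\ size w = (n * n.+1) %/ 2, letters n w & arr n w (size w) = rev (iota 1 n.+1)].
Proof. by case/and3P => /eqP ? ? /eqP ?. Qed.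

Lemma arr0 n w : arr n w 0 = iota 1 n.+1.
Proof. by rewrite /arr take0. Qed.

Lemma arrS n w j : j < size w -> arr n w j.+1 = swap_at (arr n w j) (nth 0 w j).
Proof. by move=> j_lt; rewrite /arr (take_nth 0 j_lt) foldl_rcons. Qed.

Lemma arr_perm n w j : letters n w -> j <= size w ->
  [/\ size (arr n w j) = n.+1, uniq (arr n w j) & arr n w j =i iota 1 n.+1].
Proof.
move=> w_letters; elim: j => [|j IHj] j_le; first by rewrite arr0 size_iota iota_uniq.
have [arr_size arr_uniq arr_mem] := IHj (ltnW j_le).
have hp : 0 < nth 0 w j < size (arr n w j) by rewrite arr_size letter_range.
rewrite arrS // size_swap // uniq_swap //; split=> // a.
by rewrite mem_swap // arr_mem.
Qed.

Lemma nth_arrS n w j i : letters n w -> j < size w ->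
  nth 0 (arr n w j.+1) i = nth 0 (arr n w j) (swap_index (nth 0 w j) i).
Proof.
move=> w_letters j_lt; have [arr_size _ _] := arr_perm w_letters (ltnW j_lt).
by rewrite arrS // nth_swap // arr_size letter_range.
Qed.

Lemma index_arrS n w j a : letters n w -> j < size w ->
  index a (arr n w j.+1) = swap_index (nth 0 w j) (index a (arr n w j)).
Proof.
move=> w_letters j_lt; have [arr_size arr_uniq _] := arr_perm w_letters (ltnW j_lt).
by rewrite arrS // index_swap // arr_size letter_range.
Qed.

Lemma node_wires n w j : letters n w -> j < size w ->
  [/\ 0 < wireL n w j <= n.+1, 0 < wireR n w j <= n.+1 & wireL n w j != wireR n w j].
Proof.
move=> w_letters j_lt; have hp := letter_range w_letters j_lt.
have [arr_size arr_uniq arr_mem] := arr_perm w_letters (ltnW j_lt).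
have wire_range i : i < n.+1 -> 0 < nth 0 (arr n w j) i <= n.+1.
  move=> i_lt; have : nth 0 (arr n w j) i \in arr n w j by rewrite mem_nth ?arr_size.
  by rewrite arr_mem mem_iota; lia.
rewrite /wireL /wireR !wire_range; try lia; split=> //.
by rewrite nth_uniq ?arr_size //; lia.
Qed.

Lemma index_iota1 a m : 0 < a <= m -> index a (iota 1 m) = a.-1.
Proof.
move=> a_range; have a_lt : a.-1 < size (iota 1 m) by rewrite size_iota; lia.
have nth_a : nth 0 (iota 1 m) a.-1 = a by rewrite nth_iota; lia.
by rewrite -{1}nth_a index_uniq // iota_uniq.
Qed.

Lemma nth_rev_iota m i : i < m -> nth 0 (rev (iota 1 m)) i = m - i.
Proof. by move=> i_lt; rewrite nth_rev ?size_iota // nth_iota; lia. Qed.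

Lemma index_rev_iota a m : 0 < a <= m -> index a (rev (iota 1 m)) = m - a.
Proof.
move=> a_range; have i_lt : m - a < size (rev (iota 1 m)) by rewrite size_rev size_iota; lia.
have nth_a : nth 0 (rev (iota 1 m)) (m - a) = a by rewrite nth_rev_iota; lia.
by rewrite -{1}nth_a index_uniq // rev_uniq iota_uniq.
Qed.

Definition inversions (m : nat) (s : seq nat) : nat :=
  \sum_(0 <= b < m) \sum_(1 <= a < b) (index b s < index a s).

Lemma sum_indicator m x y : 0 < x < y -> y < m ->
  \sum_(0 <= b < m) \sum_(1 <= a < b) ((a == x) && (b == y)) = 1.
Proof.
move=> xy ym; rewrite (bigD1_seq y) ?mem_iota ?iota_uniq //=; last lia.
rewrite [X in _ + X]big1 ?addn0 => [|b yb]; last first.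
  by rewrite big1 // => a _; rewrite (negbTE yb) andbF.
rewrite (bigD1_seq x) ?mem_iota ?iota_uniq //=; last lia.
by rewrite !eqxx big1 // => a /negbTE ->.
Qed.

Lemma index_eq_nth (s : seq nat) i c : uniq s -> i < size s ->
  (index c s == i) = (c == nth 0 s i).
Proof.
move=> s_uniq i_lt; apply/eqP/eqP => [ci|->]; last by rewrite index_uniq.
by rewrite -ci; apply/esym/nth_index; rewrite -index_mem ci.
Qed.

Lemma inversion_pair_swap (s : seq nat) p a b : uniq s -> 0 < p < size s ->
  nth 0 s p.-1 < nth 0 s p -> a < b ->
  (index b (swap_at s p) < index a (swap_at s p)) =
  (index b s < index a s) + ((a == nth 0 s p.-1) && (b == nth 0 s p)) :> nat.
Proof.
move=> s_uniq hp xy ab; rewrite !index_swap //.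
have p1_lt : p.-1 < size s by lia.
have p_lt : p < size s by lia.
have [/andP[/eqP-> /eqP->]|not_xy] := boolP ((a == nth 0 s p.-1) && (b == nth 0 s p)).
  rewrite !index_uniq // swap_index_left swap_index_right; last lia.
  by rewrite ltn_predL [p < _]ltnNge leq_pred; case/andP: hp => ->.
rewrite addn0 swap_index_mono //; first lia; apply/andP => -[/eqP ib /eqP ia].
  have /eqP ea : a == nth 0 s p by rewrite -index_eq_nth // ia.
  have /eqP eb : b == nth 0 s p.-1 by rewrite -index_eq_nth // ib.
  by move: ab; rewrite ea eb ltnNge ltnW.
have /eqP ea : a == nth 0 s p.-1 by rewrite -index_eq_nth // ia.
have /eqP eb : b == nth 0 s p by rewrite -index_eq_nth // ib.
by rewrite ea eb !eqxx in not_xy.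
Qed.

Lemma inversions_swap (s : seq nat) p m : uniq s -> 0 < p < size s -> {in s, forall c, 0 < c} ->
  nth 0 s p.-1 < nth 0 s p < m -> inversions m (swap_at s p) = (inversions m s).+1.
Proof.
move=> s_uniq hp s_pos /andP[xy ym].
have x_pos : 0 < nth 0 s p.-1.
  by apply: s_pos; apply: mem_nth; apply: leq_ltn_trans (leq_pred p) _; case/andP: hp.
rewrite -addn1 -[X in _ + X](sum_indicator (_ : 0 < nth 0 s p.-1 < nth 0 s p) ym) ?x_pos //.
rewrite -big_split; apply: eq_big_nat => b _; rewrite -big_split.
by apply: eq_big_nat => a a_range; apply: inversion_pair_swap => //; lia.
Qed.

Lemma inversions_iota n : inversions n.+2 (iota 1 n.+1) = 0.
Proof.
rewrite /inversions big_nat big1 // => b b_lt; rewrite big_nat big1 // => a a_range.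
by rewrite !index_iota1; lia.
Qed.

Lemma inversions_rev_iota n : inversions n.+2 (rev (iota 1 n.+1)) = (n * n.+1) %/ 2.
Proof.
rewrite /inversions (eq_big_nat _ _ (F2 := fun b => b.-1)) => [|b b_lt]; last first.
  rewrite (eq_big_nat _ _ (F2 := fun _ => 1)) ?sum_nat_const_nat ?muln1 => [|a a_range]; first lia.
  by rewrite !index_rev_iota; lia.
by rewrite big_nat_recl //= add0n bin2_sum bin2 divn2 mulnC.
Qed.

Definition inv_at (n : nat) (w : seq nat) (j : nat) : nat := inversions n.+2 (arr n w j).

Lemma inv_at_node n w j : letters n w -> j < size w ->
  (wireL n w j < wireR n w j -> inv_at n w j.+1 = (inv_at n w j).+1) /\
  (wireR n w j < wireL n w j -> inv_at n w j = (inv_at n w j.+1).+1).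
Proof.
move=> w_letters j_lt; have p_range := letter_range w_letters j_lt.
have [arr_size arr_uniq arr_mem] := arr_perm w_letters (ltnW j_lt).
have [L_range R_range _] := node_wires w_letters j_lt.
have hp : 0 < nth 0 w j < size (arr n w j) by rewrite arr_size.
have arr_pos : {in arr n w j, forall c, 0 < c} by move=> c; rewrite arr_mem mem_iota; lia.
rewrite /inv_at arrS //; split=> [ascent|descent].
  by rewrite inversions_swap //; rewrite -/(wireL n w j) -/(wireR n w j); lia.
rewrite -{1}(swapK hp) inversions_swap ?uniq_swap ?size_swap //.
- by move=> c; rewrite mem_swap //; apply: arr_pos.
- rewrite !nth_swap // swap_index_left swap_index_right; last lia.
  by rewrite -/(wireL n w j) -/(wireR n w j); lia.
Qed.

Lemma inv_at_growth n w j1 j2 : letters n w -> j1 <= j2 <= size w ->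
  inv_at n w j2 <= inv_at n w j1 + (j2 - j1).
Proof.
move=> w_letters; elim: j2 => [|j2 IHj2] j_range; first by rewrite (_ : j1 = 0); lia.
have [->|j1_ne] := eqVneq j1 j2.+1; first lia.
have IH : inv_at n w j2 <= inv_at n w j1 + (j2 - j1) by apply: IHj2; lia.
have j2_lt : j2 < size w by lia.
have [_ _ LR_ne] := node_wires w_letters j2_lt.
have [ascent descent] := inv_at_node w_letters j2_lt.
case: (ltngtP (wireL n w j2) (wireR n w j2)) LR_ne => [/ascent|/descent|]; rewrite ?eqxx //; lia.
Qed.

(* Indeed the inversion number must climb
   from 0 to N = size w in N steps of at most one. *)
Lemma node_ascent n w j : Sigma n w -> j < size w -> wireL n w j < wireR n w j.
Proof.
move=> w_Sigma j_lt; have [w_size w_letters w_final] := SigmaP w_Sigma.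
have inv_end : inv_at n w (size w) = size w by rewrite /inv_at w_final inversions_rev_iota.
have inv_start : inv_at n w 0 = 0 by rewrite /inv_at arr0 inversions_iota.
have [_ _ LR_ne] := node_wires w_letters j_lt; have [_ descent] := inv_at_node w_letters j_lt.
case: ltngtP LR_ne => // /descent drop _.
have : inv_at n w j <= inv_at n w 0 + (j - 0) by apply: inv_at_growth; lia.
have : inv_at n w (size w) <= inv_at n w j.+1 + (size w - j.+1).
  by apply: inv_at_growth; lia.
lia.
Qed.

Definition untouched (w : seq nat) (j i : nat) : bool :=
  (nth 0 w j < i) || (i.+1 < nth 0 w j).

Lemma nth_arr_untouched n w j0 j i : letters n w -> j0 <= j <= size w ->
  (forall j', j0 <= j' < j -> untouched w j' i) -> nth 0 (arr n w j) i = nth 0 (arr n w j0) i.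
Proof.
move=> w_letters; elim: j => [|j IHj] j_range still; first by rewrite (_ : j0 = 0); lia.
have [->//|j0_ne] := eqVneq j0 j.+1.
rewrite nth_arrS ?swap_index_id; try lia.
- by apply: IHj => [|j' j'_range]; [lia | apply: still; lia].
all: have j_free : untouched w j i by apply: still; lia.
all: by apply/eqP; move: j_free; rewrite /untouched; lia.
Qed.

Lemma untouched_not_on_wire n w j i : letters n w -> j < size w -> i < n.+1 ->
  untouched w j i -> ~~ on_wire n w (nth 0 (arr n w j) i) j.
Proof.
move=> w_letters j_lt i_lt i_free; have p_range := letter_range w_letters j_lt.
have [arr_size arr_uniq _] := arr_perm w_letters (ltnW j_lt).
move: i_free; rewrite /untouched /on_wire /wireL /wireR => i_free.
by rewrite !nth_uniq ?arr_size //; lia.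
Qed.

Lemma untouched_to_bottom n w j0 i : Sigma n w -> i < n.+1 -> j0 <= size w ->
  (forall j', j0 <= j' < size w -> untouched w j' i) ->
  nth 0 (arr n w j0) i = n.+1 - i /\
  (forall j, j0 <= j < size w -> ~~ on_wire n w (n.+1 - i) j).
Proof.
move=> w_Sigma i_lt j0_le still; have [_ w_letters w_final] := SigmaP w_Sigma.
have from_j0 j : j0 <= j <= size w -> nth 0 (arr n w j) i = nth 0 (arr n w j0) i.
  by move=> j_range; apply: nth_arr_untouched => // j' ?; apply: still; lia.
have final : nth 0 (arr n w j0) i = n.+1 - i.
  by rewrite -(from_j0 (size w)) ?w_final ?nth_rev_iota //; lia.
split=> // j j_range; rewrite -final -(from_j0 j) ?untouched_not_on_wire //; try lia.
by apply: still.
Qed.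

Section UnitSteps.

Variables (f : nat -> nat) (b : nat -> bool) (m : nat).
Hypothesis f_step : forall j, j < m -> f j.+1 = f j + b j.

Lemma unit_steps_mono j1 j2 : j1 <= j2 <= m -> f j1 <= f j2.
Proof.
elim: j2 => [|j2 IHj2] j_range; first by rewrite (_ : j1 = 0); lia.
have [->//|j1_ne] := eqVneq j1 j2.+1.
have IH : f j1 <= f j2 by apply: IHj2; lia.
by rewrite f_step; lia.
Qed.

Lemma unit_steps_strict j1 j j2 : j1 <= j < j2 -> j2 <= m -> b j -> f j1 < f j2.
Proof.
move=> j_range j2_le b_j.
have before : f j1 <= f j by apply: unit_steps_mono; lia.
have after : f j.+1 <= f j2 by apply: unit_steps_mono; lia.
by move: after; rewrite f_step ?b_j; lia.
Qed.

Lemma unit_steps_lt j1 j2 : j1 <= m -> f j1 < f j2 -> j1 < j2.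
Proof.
move=> j1_le f_lt; rewrite ltnNge; apply/negP => j2_le.
have : f j2 <= f j1 by apply: unit_steps_mono; lia.
lia.
Qed.

Lemma unit_steps_hit v : f 0 <= v < f m -> exists2 j, j < m & b j && (f j == v).
Proof.
move=> v_range; suff hit m' : m' <= m -> v < f m' -> exists2 j, j < m & b j && (f j == v).
  by apply: (hit m); lia.
elim: m' => [|m' IHm'] m'_le v_lt; first lia.
have [v_lt'|f_le] := ltnP v (f m'); first by apply: IHm'; lia.
move: v_lt; rewrite f_step; last lia.
case b_m' : (b m') => /= v_lt; last lia.
by exists m'; rewrite ?b_m' //=; apply/eqP; lia.
Qed.

End UnitSteps.

Lemma xnode_sym n w a b : xnode n w a b = xnode n w b a.
Proof. by apply: eq_find => j; rewrite /is_cross orbC. Qed.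

Lemma xnode_spec n w a b j : j < size w -> is_cross n w a b j ->
  xnode n w a b < size w /\ is_cross n w a b (xnode n w a b).
Proof.
move=> j_lt j_cross.
have crosses : has (is_cross n w a b) (iota 0 (size w)).
  by apply/hasP; exists j; rewrite ?mem_iota.
have xnode_lt : xnode n w a b < size w by move: crosses; rewrite has_find size_iota.
by split=> //; have := nth_find 0 crosses; rewrite nth_iota.
Qed.

Lemma straight_nil n w a x y :
  (forall j, j < size w -> minn x y < j < maxn x y -> ~~ on_wire n w a j) ->
  straight n w (a, (x, y)) = [::].
Proof.
move=> off_wire; apply/eqP; rewrite -[_ == _]negbK -has_filter; apply/hasPn => j.
rewrite mem_iota add0n /= => j_lt; case: (boolP (minn x y < j < maxn x y)) => j_in.
  by rewrite (negbTE (off_wire j j_lt j_in)).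
by rewrite andbF.
Qed.

Lemma straight_sym n w a x y : straight n w (a, (x, y)) = straight n w (a, (y, x)).
Proof. by rewrite /straight /= minnC maxnC. Qed.

Lemma rigorous3 n w k b :
  xnode n w k b < size w -> xnode n w b k.+1 < size w -> xnode n w k b != xnode n w b k.+1 ->
  seg_oriented k (k, (size w, xnode n w k b)) ->
  seg_oriented k (b, (xnode n w k b, xnode n w b k.+1)) ->
  seg_oriented k (k.+1, (xnode n w b k.+1, size w)) ->
  straight n w (k, (size w, xnode n w k b)) = [::] ->
  straight n w (b, (xnode n w k b, xnode n w b k.+1)) = [::] ->
  straight n w (k.+1, (xnode n w b k.+1, size w)) = [::] ->
  rigorous n w k [:: k; b; k.+1].
Proof.
move=> lt1 lt2 ne12 o1 o2 o3 s1 s2 s3.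
rewrite /rigorous /passed /segments /seg_times /switches /= s1 s2 s3 /=.
by rewrite !eqxx lt1 lt2 o1 o2 o3 /= inE ne12.
Qed.

Lemma rigorous2 n w k : xnode n w k k.+1 < size w ->
  seg_oriented k (k, (size w, xnode n w k k.+1)) ->
  seg_oriented k (k.+1, (xnode n w k k.+1, size w)) ->
  straight n w (k, (size w, xnode n w k k.+1)) = [::] ->
  straight n w (k.+1, (xnode n w k k.+1, size w)) = [::] ->
  rigorous n w k [:: k; k.+1].
Proof.
move=> lt1 o1 o2 s1 s2.
by rewrite /rigorous /passed /segments /seg_times /switches /= s1 s2 /= !eqxx lt1 o1 o2.
Qed.

Section LastWireSweep.

Variables (n : nat) (w : seq nat).
Hypotheses (w_Sigma : Sigma n w) (w_indD : indD n w = 0).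

Let w_letters : letters n w. Proof. by case: (SigmaP w_Sigma). Qed.

Definition posD (j : nat) : nat := index n.+1 (arr n w j).

Lemma posD_lt j : j <= size w -> posD j < n.+1.
Proof.
move=> j_le; have [arr_size _ arr_mem] := arr_perm w_letters j_le.
by rewrite /posD -[X in _ < X]arr_size index_mem arr_mem mem_iota; lia.
Qed.

Lemma nodeD_on j : j < size w -> on_wire n w n.+1 j ->
  [/\ wireR n w j = n.+1, nth 0 w j = posD j & posD j.+1 = (posD j).-1].
Proof.
move=> j_lt on_last; have [arr_size arr_uniq _] := arr_perm w_letters (ltnW j_lt).
have p_range := letter_range w_letters j_lt; have LR := node_ascent w_Sigma j_lt.
have [_ R_range _] := node_wires w_letters j_lt.
have R_last : wireR n w j = n.+1 by case/orP: on_last => /eqP; lia.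
have pos_p : posD j = nth 0 w j by rewrite /posD -R_last /wireR index_uniq ?arr_size //; lia.
by rewrite /posD index_arrS // -/(posD j) pos_p swap_index_right //; lia.
Qed.

Lemma nodeD_off j : j < size w -> ~~ on_wire n w n.+1 j ->
  nth 0 w j < posD j /\ posD j.+1 = posD j.
Proof.
move=> j_lt off_last; have p_range := letter_range w_letters j_lt.
have [arr_size _ arr_mem] := arr_perm w_letters (ltnW j_lt).
have left_of_last : nth 0 w j <= (posD j).+1.
  move/eqP: w_indD; rewrite /indD -leqn0 leqNgt -has_count => /hasPn/(_ j).
  by rewrite mem_iota j_lt /= off_last /pos => /(_ isT); rewrite -/(posD j); lia.
have last_in : n.+1 \in arr n w j by rewrite arr_mem mem_iota; lia.
have not_at i : nth 0 (arr n w j) i != n.+1 -> i != posD j.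
  by apply: contra => /eqP ->; rewrite nth_index.
move: off_last; rewrite /on_wire negb_or => /andP[/not_at L_ne /not_at R_ne].
by rewrite /posD index_arrS // -/(posD j) swap_index_id 1?eq_sym //; split=> //; lia.
Qed.

(* Number of wires that have already crossed ell_(n+1) above node j. *)
Definition crossedD (j : nat) : nat := n - posD j.

Lemma crossedD_step j : j < size w -> crossedD j.+1 = crossedD j + on_wire n w n.+1 j.
Proof.
move=> j_lt; have := posD_lt (ltnW j_lt); rewrite /crossedD.
case: (boolP (on_wire n w n.+1 j)) => [on_last|off_last].
  have [_ p_pos ->] := nodeD_on j_lt on_last.
  by have := letter_range w_letters j_lt; lia.
by have [_ ->] := nodeD_off j_lt off_last; lia.
Qed.

Lemma crossedD_ends : crossedD 0 = 0 /\ crossedD (size w) = n.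
Proof.
have [_ _ w_final] := SigmaP w_Sigma.
by rewrite /crossedD /posD arr0 w_final index_iota1 ?index_rev_iota; lia.
Qed.

Lemma letter_le_posD j : j < size w -> nth 0 w j <= posD j.
Proof.
move=> j_lt; case: (boolP (on_wire n w n.+1 j)) => [/(nodeD_on j_lt)[_ -> _]//|].
by case/(nodeD_off j_lt) => /ltnW.
Qed.

Lemma right_of_last_untouched j0 j i : j0 <= j < size w -> posD j0 < i -> untouched w j i.
Proof.
move=> j_range i_gt; have j_lt : j < size w by lia.
have p_le := letter_le_posD j_lt; have := posD_lt (ltnW j_lt).
have j0_le : j0 <= size w by lia.
have := posD_lt j0_le.
have : crossedD j0 <= crossedD j by apply: (unit_steps_mono crossedD_step); lia.
by rewrite /untouched /crossedD; lia.
Qed.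

Lemma crossD_partner j : j < size w -> on_wire n w n.+1 j ->
  wireL n w j = n.+1 - posD j /\
  (forall j', j < j' < size w -> ~~ on_wire n w (wireL n w j) j').
Proof.
move=> j_lt on_last; have [_ p_pos next_pos] := nodeD_on j_lt on_last.
have p_range := letter_range w_letters j_lt.
have moved : nth 0 (arr n w j.+1) (posD j) = wireL n w j.
  by rewrite nth_arrS // -p_pos swap_index_right //; lia.
have still j' : j.+1 <= j' < size w -> untouched w j' (posD j).
  by move=> j'_range; apply: (right_of_last_untouched j'_range); rewrite next_pos; lia.
have [final frozen] := untouched_to_bottom w_Sigma (posD_lt (ltnW j_lt)) j_lt still.
rewrite -moved final; split=> // j' j'_range; apply: frozen; lia.
Qed.

Lemma is_crossD a j : 0 < a <= n -> j < size w ->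
  is_cross n w a n.+1 j = on_wire n w n.+1 j && (crossedD j == a.-1).
Proof.
move=> a_range j_lt; have LR := node_ascent w_Sigma j_lt.
have [_ R_range _] := node_wires w_letters j_lt; have pos_lt := posD_lt (ltnW j_lt).
rewrite /is_cross j_lt /=; apply/idP/idP.
  case/orP=> /andP[/eqP L_a /eqP R_last]; last lia.
  have on_last : on_wire n w n.+1 j by rewrite /on_wire R_last eqxx orbT.
  have [L_eq _] := crossD_partner j_lt on_last.
  by rewrite on_last /crossedD; apply/eqP; lia.
case/andP=> on_last /eqP crossed.
have [R_last _ _] := nodeD_on j_lt on_last; have [L_eq _] := crossD_partner j_lt on_last.
by rewrite R_last L_eq eqxx andbT; apply/orP; left; apply/eqP; move: crossed; rewrite /crossedD; lia.
Qed.

(* Every wire a <= n crosses ell_(n+1), at a node t where a-1 wires have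
   crossed it before; below t wire a is frozen, so it passes no node there. *)
Lemma xnodeD a : 0 < a <= n ->
  [/\ xnode n w a n.+1 < size w, on_wire n w n.+1 (xnode n w a n.+1),
      crossedD (xnode n w a n.+1) = a.-1 &
      straight n w (a, (xnode n w a n.+1, size w)) = [::]].
Proof.
move=> a_range; have [start stop] := crossedD_ends.
have [j j_lt /andP[on_last /eqP crossed]] : exists2 j, j < size w &
    on_wire n w n.+1 j && (crossedD j == a.-1).
  by apply: (unit_steps_hit crossedD_step); rewrite start stop; lia.
have j_cross : is_cross n w a n.+1 j by rewrite is_crossD // on_last crossed eqxx.
have [t_lt] := xnode_spec j_lt j_cross; set t := xnode n w a n.+1 in t_lt *.
rewrite is_crossD // => /andP[t_on /eqP t_crossed].
have [L_eq frozen] := crossD_partner t_lt t_on.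
have L_a : wireL n w t = a.
  by rewrite L_eq; move: t_crossed; have := posD_lt (ltnW t_lt); rewrite /crossedD; lia.
split=> //; apply: straight_nil => j' _ j'_range; rewrite -L_a; apply: frozen; lia.
Qed.

Lemma last_quietD a j2 : 0 < a <= n -> j2 <= size w -> crossedD j2 = a ->
  straight n w (n.+1, (xnode n w a n.+1, j2)) = [::].
Proof.
move=> a_range j2_le j2_crossed; have [t_lt t_on t_crossed _] := xnodeD a_range.
have after_t : crossedD (xnode n w a n.+1).+1 = a by rewrite crossedD_step // t_on; lia.
have t_j2 : xnode n w a n.+1 < j2 by apply: (unit_steps_lt crossedD_step); lia.
apply: straight_nil => j _ j_range; apply/negP => j_on.
have j_mid : (xnode n w a n.+1).+1 <= j < j2 by lia.
by have := unit_steps_strict crossedD_step j_mid j2_le j_on; lia.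
Qed.

Lemma canonical_pathD k : 1 <= k <= n ->
  rigorous n w k (compress [:: k; n.+1; k.+1]) /\
  peaks n w k (compress [:: k; n.+1; k.+1]) = [:: xnode n w k n.+1].
Proof.
move=> k_range; have [_ stop] := crossedD_ends.
have [t_lt _ t_crossed k_still] := xnodeD k_range.
have [k_lt|k_n] := ltnP k n; last first.
  have k_eq : k = n by lia.
  subst k; rewrite /= eqxx ifN_eq; last by apply/eqP; lia.
  split; last by rewrite /peaks /= /up leqnn ltnn.
  apply: rigorous2; rewrite /seg_oriented /up /= ?leqnn ?ltnn ?last_quietD //.
  by rewrite straight_sym.
have k1_range : 0 < k.+1 <= n by lia.
have [t2_lt _ t2_crossed k1_still] := xnodeD k1_range.
have t_t2 : xnode n w k n.+1 < xnode n w k.+1 n.+1.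
  by apply: (unit_steps_lt crossedD_step); lia.
rewrite /= !ifN_eq; try by apply/eqP; lia.
have last_down : up k n.+1 = false by rewrite /up; lia.
split; last by rewrite /peaks /= last_down /up leqnn.
apply: rigorous3; rewrite ?[xnode n w n.+1 k.+1]xnode_sym /seg_oriented /= ?last_down /up //.
- by rewrite neq_ltn t_t2.
- by rewrite leqnn.
- by rewrite ltnn.
- by rewrite straight_sym.
- by apply: last_quietD; rewrite ?t2_crossed //; lia.
Qed.

End LastWireSweep.

Section FirstWireSweep.

Variables (n : nat) (w : seq nat).
Hypotheses (w_Sigma : Sigma n w) (w_indA : indA n w = 0).

Let w_letters : letters n w. Proof. by case: (SigmaP w_Sigma). Qed.

(* 0-based position of the first wire ell_1 just above node j; it also counts
   the wires that have already crossed ell_1. *)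
Definition posA (j : nat) : nat := index 1 (arr n w j).

Lemma posA_lt j : j <= size w -> posA j < n.+1.
Proof.
move=> j_le; have [arr_size _ arr_mem] := arr_perm w_letters j_le.
by rewrite /posA -[X in _ < X]arr_size index_mem arr_mem mem_iota; lia.
Qed.

Lemma nodeA_on j : j < size w -> on_wire n w 1 j ->
  [/\ wireL n w j = 1, (nth 0 w j).-1 = posA j & posA j.+1 = (posA j).+1].
Proof.
move=> j_lt on_first; have [arr_size arr_uniq _] := arr_perm w_letters (ltnW j_lt).
have p_range := letter_range w_letters j_lt; have LR := node_ascent w_Sigma j_lt.
have [L_range _ _] := node_wires w_letters j_lt.
have L_first : wireL n w j = 1 by case/orP: on_first => /eqP; lia.
have pos_p : posA j = (nth 0 w j).-1.
  by rewrite /posA -L_first /wireL index_uniq ?arr_size //; lia.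
by rewrite /posA index_arrS // -/(posA j) pos_p swap_index_left; split=> //; lia.
Qed.

Lemma nodeA_off j : j < size w -> ~~ on_wire n w 1 j ->
  (posA j).+1 < nth 0 w j /\ posA j.+1 = posA j.
Proof.
move=> j_lt off_first; have p_range := letter_range w_letters j_lt.
have [arr_size _ arr_mem] := arr_perm w_letters (ltnW j_lt).
have right_of_first : posA j <= nth 0 w j.
  move/eqP: w_indA; rewrite /indA -leqn0 leqNgt -has_count => /hasPn/(_ j).
  by rewrite mem_iota j_lt /= off_first /pos => /(_ isT); rewrite -/(posA j); lia.
have first_in : 1 \in arr n w j by rewrite arr_mem mem_iota; lia.
have not_at i : nth 0 (arr n w j) i != 1 -> i != posA j.
  by apply: contra => /eqP ->; rewrite nth_index.
move: off_first; rewrite /on_wire negb_or => /andP[/not_at L_ne /not_at R_ne].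
by rewrite /posA index_arrS // -/(posA j) swap_index_id 1?eq_sym //; split=> //; lia.
Qed.

Lemma posA_step j : j < size w -> posA j.+1 = posA j + on_wire n w 1 j.
Proof.
move=> j_lt; case: (boolP (on_wire n w 1 j)) => [on_first|off_first].
  by have [_ _ ->] := nodeA_on j_lt on_first; lia.
by have [_ ->] := nodeA_off j_lt off_first; lia.
Qed.

Lemma posA_ends : posA 0 = 0 /\ posA (size w) = n.
Proof.
have [_ _ w_final] := SigmaP w_Sigma.
by rewrite /posA arr0 w_final index_iota1 ?index_rev_iota; lia.
Qed.

Lemma posA_lt_letter j : j < size w -> posA j < nth 0 w j.
Proof.
move=> j_lt; have p_range := letter_range w_letters j_lt.
case: (boolP (on_wire n w 1 j)) => [/(nodeA_on j_lt)[_ <- _]|]; first lia.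
by case/(nodeA_off j_lt) => p_gt _; lia.
Qed.

Lemma left_of_first_untouched j0 j i : j0 <= j < size w -> i < posA j0 -> untouched w j i.
Proof.
move=> j_range i_lt; have j_lt : j < size w by lia.
have p_gt := posA_lt_letter j_lt.
have : posA j0 <= posA j by apply: (unit_steps_mono posA_step); lia.
by rewrite /untouched; lia.
Qed.

Lemma crossA_partner j : j < size w -> on_wire n w 1 j ->
  wireR n w j = n.+1 - posA j /\
  (forall j', j < j' < size w -> ~~ on_wire n w (wireR n w j) j').
Proof.
move=> j_lt on_first; have [_ p_pos next_pos] := nodeA_on j_lt on_first.
have moved : nth 0 (arr n w j.+1) (posA j) = wireR n w j.
  by rewrite nth_arrS // -p_pos swap_index_left.
have still j' : j.+1 <= j' < size w -> untouched w j' (posA j).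
  by move=> j'_range; apply: (left_of_first_untouched j'_range); rewrite next_pos.
have [final frozen] := untouched_to_bottom w_Sigma (posA_lt (ltnW j_lt)) j_lt still.
rewrite -moved final; split=> // j' j'_range; apply: frozen; lia.
Qed.

Lemma is_crossA a j : 1 < a <= n.+1 -> j < size w ->
  is_cross n w 1 a j = on_wire n w 1 j && (posA j == n.+1 - a).
Proof.
move=> a_range j_lt; have LR := node_ascent w_Sigma j_lt.
have [L_range _ _] := node_wires w_letters j_lt; have pos_lt := posA_lt (ltnW j_lt).
rewrite /is_cross j_lt /=; apply/idP/idP.
  case/orP=> /andP[/eqP L_first /eqP R_a]; last lia.
  have on_first : on_wire n w 1 j by rewrite /on_wire L_first eqxx.
  have [R_eq _] := crossA_partner j_lt on_first.
  by rewrite on_first; apply/eqP; lia.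
case/andP=> on_first /eqP crossed.
have [L_first _ _] := nodeA_on j_lt on_first; have [R_eq _] := crossA_partner j_lt on_first.
by rewrite L_first R_eq eqxx /=; apply/orP; left; apply/eqP; lia.
Qed.

(* Every wire a >= 2 crosses ell_1, at a node t where n+1-a wires have
   crossed it before; below t wire a is frozen, so it passes no node there. *)
Lemma xnodeA a : 1 < a <= n.+1 ->
  [/\ xnode n w 1 a < size w, on_wire n w 1 (xnode n w 1 a),
      posA (xnode n w 1 a) = n.+1 - a &
      straight n w (a, (xnode n w 1 a, size w)) = [::]].
Proof.
move=> a_range; have [start stop] := posA_ends.
have [j j_lt /andP[on_first /eqP crossed]] : exists2 j, j < size w &
    on_wire n w 1 j && (posA j == n.+1 - a).
  by apply: (unit_steps_hit posA_step); rewrite start stop; lia.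
have j_cross : is_cross n w 1 a j by rewrite is_crossA // on_first crossed eqxx.
have [t_lt] := xnode_spec j_lt j_cross; set t := xnode n w 1 a in t_lt *.
rewrite is_crossA // => /andP[t_on /eqP t_crossed].
have [R_eq frozen] := crossA_partner t_lt t_on.
have R_a : wireR n w t = a by rewrite R_eq t_crossed; lia.
split=> //; apply: straight_nil => j' _ j'_range; rewrite -R_a; apply: frozen; lia.
Qed.

Lemma first_quietA a j2 : 1 < a <= n.+1 -> j2 <= size w -> posA j2 = n.+2 - a ->
  straight n w (1, (xnode n w 1 a, j2)) = [::].
Proof.
move=> a_range j2_le j2_crossed; have [t_lt t_on t_crossed _] := xnodeA a_range.
have after_t : posA (xnode n w 1 a).+1 = n.+2 - a by rewrite posA_step // t_on; lia.
have t_j2 : xnode n w 1 a < j2 by apply: (unit_steps_lt posA_step); lia.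
apply: straight_nil => j _ j_range; apply/negP => j_on.
have j_mid : (xnode n w 1 a).+1 <= j < j2 by lia.
by have := unit_steps_strict posA_step j_mid j2_le j_on; lia.
Qed.

Lemma canonical_pathA k : 1 <= k <= n ->
  rigorous n w k (compress [:: k; 1; k.+1]) /\
  peaks n w k (compress [:: k; 1; k.+1]) = [:: xnode n w 1 k.+1].
Proof.
move=> k_range; have [_ stop] := posA_ends.
have k1_range : 1 < k.+1 <= n.+1 by lia.
have [t_lt _ t_crossed k1_still] := xnodeA k1_range.
have [k_gt|k_1] := ltnP 1 k; last first.
  have k_eq : k = 1 by lia.
  subst k; split=> //=.
  apply: rigorous2; rewrite /seg_oriented /up /= ?ltnn //.
  by rewrite straight_sym first_quietA //; lia.
have k_range' : 1 < k <= n.+1 by lia.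
have [t1_lt _ t1_crossed k_still] := xnodeA k_range'.
have t2_t1 : xnode n w 1 k.+1 < xnode n w 1 k.
  by apply: (unit_steps_lt posA_step); lia.
rewrite /= !ifN_eq; try by apply/eqP; lia.
have first_up : up k 1 by rewrite /up; lia.
split; last by rewrite /peaks /= first_up /up leqnn ltnn.
apply: rigorous3; rewrite ?[xnode n w k 1]xnode_sym /seg_oriented /= ?first_up /up ?leqnn ?ltnn //.
- by rewrite neq_ltn t2_t1 orbT.
- by rewrite straight_sym.
- by rewrite straight_sym first_quietA //; lia.
Qed.

End FirstWireSweep.

Theorem mainTheorem14 (n : nat) (w : seq nat) :
  1 <= n -> Sigma n w ->
  (indD n w = 0 -> forall k, 1 <= k <= n ->
     rigorous n w k (compress [:: k; n.+1; k.+1]) /\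
     peaks n w k (compress [:: k; n.+1; k.+1]) = [:: xnode n w k n.+1]) /\
  (indA n w = 0 -> forall k, 1 <= k <= n ->
     rigorous n w k (compress [:: k; 1; k.+1]) /\
     peaks n w k (compress [:: k; 1; k.+1]) = [:: xnode n w 1 k.+1]).
Proof.
move=> _ w_Sigma; split=> [w_indD | w_indA] k k_range.
- exact: canonical_pathD.
- exact: canonical_pathA.
Qed.
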